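(* Let \[ \theta = \begin{pmatrix} 0 & \theta_{1,2} & \theta_{1,3} \\ -\theta_{1,2} & 0 & \theta_{2,3} \\ -\theta_{1,3} & -\theta_{2,3} & 0 \end{pmatrix} \] be a skew symmetric real $3 \times 3$ matrix. Then $\theta$ is nondegenerate if and only if $\dim_{\mathbb{Q}} \operatorname{span}_{\mathbb{Q}}(1, \theta_{1,2}, \theta_{1,3}, \theta_{2,3}) \geq 3$.
   Context: A skew symmetric real $d \times d$ matrix $\theta$ is nondegenerate if there is no $x \in \mathbb{Q}^d \setminus \{0\}$ such that $\langle x, \theta y \rangle \in \mathbb{Q}$ for all $y \in \mathbb{Q}^d$. *)

From HB Require Import structures.
From mathcomp Require Import all_boot all_order all_algebra.
From mathcomp Require Import boolp reals.
Set Implicit Arguments. Unset Strict Implicit. Unset Printing Implicit Defensive.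
Import Order.TTheory GRing.Theory Num.Theory.
Local Open Scope ring_scope.

Definition is_rational (R : realType) (r : R) : Prop :=
  exists q : rat, r = ratr q.

Definition Q_nondegenerate (R : realType) (d : nat) (theta : 'M[R]_d) : Prop :=
  ~ exists x : 'cV[rat]_d, x != 0 /\
      forall y : 'cV[rat]_d,
        is_rational (\sum_(i < d) ratr (x i ord0) * (theta *m map_mx ratr y) i ord0).

Definition Qfree (R : realType) (s : seq R) : Prop :=
  forall c : seq rat, size c = size s ->
    \sum_(i < size s) ratr (nth 0 c i) * nth 0 s i = 0 ->
    forall i, nth 0 c i = 0.

Definition Qspan_dim (R : realType) (s : seq R) : nat :=
  \max_(m : (size s).-tuple bool | `[< Qfree (mask m s) >]) size (mask m s).

(* Write a = theta 0 1, b = theta 0 2, c = theta 1 2. By skew symmetry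
   <x, theta y> = - <theta x, y>, so theta is degenerate iff theta x is rational
   for some nonzero rational x. The entries of theta x are a x1 + b x2,
   c x2 - a x0 and -(b x0 + c x1); when x_i <> 0, two of them put two of a, b, c
   in Q + Q t, with t the third one. Conversely, if a, b, c lie in Q + Q t with
   t-coefficients qa, qb, qc, the t-parts cancel in theta x for x = (qc, -qb, qa)
   (take x = e0 if these vanish). Finally dim span_Q(1, a, b, c) <= 2 iff a, b, c
   lie in some Q + Q t: three elements of Q + Q t are dependent (a rational 3x2
   matrix has a kernel), and if each of [1; a; b], [1; a; c], [1; b; c] is
   dependent, t can be taken among a, b, c, irrational if possible. *)

From HB Require Import structures.
From mathcomp Require Import all_boot all_order all_algebra.
From mathcomp Require Import boolp reals.
From mathcomp Require Import ring lra.
Import Order.TTheory GRing.Theory Num.Theory.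
Local Open Scope ring_scope.

Lemma big_ord3 (V : nmodType) (F : 'I_3 -> V) : \sum_(i < 3) F i = F 0 + F 1 + F 2.
Proof.
rewrite !big_ord_recl big_ord0 addr0 addrA.
by congr (F _ + F _ + F _); apply/val_inj.
Qed.

Lemma ord3P (i : 'I_3) : [\/ i = 0, i = 1 | i = 2].
Proof.
by case: i => [[|[|[|n]]] // lti]; [apply: Or31 | apply: Or32 | apply: Or33]; apply: val_inj.
Qed.

Section RationalSpans.
Context {R : realType}.

Lemma is_rationalN (r : R) : is_rational (- r) <-> is_rational r.
Proof.
split=> [[q Eq]|[q ->]]; exists (- q); rewrite rmorphN //.
by rewrite -[LHS]opprK Eq.
Qed.

Lemma is_rationalD (r s : R) : is_rational r -> is_rational s -> is_rational (r + s).
Proof. by move=> [p ->] [q ->]; exists (p + q); rewrite rmorphD. Qed.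

Lemma is_rational_ratrM (q : rat) (r : R) : is_rational r -> is_rational (ratr q * r).
Proof. by move=> [p ->]; exists (q * p); rewrite rmorphM. Qed.

Lemma is_rational_pairingP {d} (w : 'cV[R]_d) :
  (forall y : 'cV[rat]_d, is_rational (\sum_i w i ord0 * ratr (y i ord0))) <->
  (forall i, is_rational (w i ord0)).
Proof.
split=> [rat_w i | rat_w y].
  have := rat_w (delta_mx i ord0); rewrite (bigD1 i) //= big1 => [|j /negbTE ji].
    by rewrite !mxE !eqxx rmorph1 mulr1 addr0.
  by rewrite !mxE ji rmorph0 mulr0.
apply: (big_ind (@is_rational R)) => [|r s|i _]; first by exists 0; rewrite rmorph0.
  exact: is_rationalD.
by rewrite mulrC; apply: is_rational_ratrM.
Qed.

Lemma Q_nondegenerate_skewP {d} (theta : 'M[R]_d) : theta^T = - theta ->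
  Q_nondegenerate theta <->
  ~ exists x : 'cV[rat]_d, x != 0 /\
      forall i, is_rational ((theta *m map_mx ratr x) i ord0).
Proof.
move=> skew.
have pairingE (x y : 'cV[rat]_d) :
    \sum_i ratr (x i ord0) * (theta *m map_mx ratr y) i ord0 =
    - \sum_i (theta *m map_mx ratr x) i ord0 * ratr (y i ord0).
  have XtE : (map_mx ratr x)^T *m theta = - (theta *m map_mx ratr x)^T.
    by rewrite -[theta in LHS]trmxK -trmx_mul skew mulNmx linearN.
  transitivity (((map_mx ratr x)^T *m (theta *m map_mx ratr y)) ord0 ord0).
    by rewrite mxE; apply: eq_bigr => i _; rewrite !mxE.
  rewrite mulmxA XtE mulNmx !mxE; congr (- _); apply: eq_bigr => i _.
  by rewrite !mxE.
split=> nondeg [x [x_neq0 rat_x]]; apply: nondeg; exists x; split=> //.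
  move=> y; rewrite pairingE; apply/is_rationalN.
  exact: (proj2 (is_rational_pairingP _) rat_x).
by apply/is_rational_pairingP => y; apply/is_rationalN; rewrite -pairingE.
Qed.

Definition in_Qspan1 (t r : R) : Prop := exists p q : rat, r = ratr p + ratr q * t.

Lemma in_Qspan1_rat (t r : R) : is_rational r -> in_Qspan1 t r.
Proof. by move=> [p ->]; exists p, 0; rewrite rmorph0 mul0r addr0. Qed.

Lemma in_Qspan1_id (t : R) : in_Qspan1 t t.
Proof. by exists 0, 1; rewrite rmorph0 rmorph1 mul1r add0r. Qed.

Lemma in_Qspan1_scale {t r : R} {k : rat} :
  k != 0 -> in_Qspan1 t (ratr k * r) -> in_Qspan1 t r.
Proof.
move=> k_neq0 [p [q E]]; exists (p / k), (q / k).
have kR_neq0 : ratr k != 0 :> R by rewrite fmorph_eq0.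
rewrite -(mulKf kR_neq0 r) E !fmorph_div; field.
exact: kR_neq0.
Qed.

Lemma is_rational_scale {r : R} {k : rat} :
  k != 0 -> is_rational (ratr k * r) -> is_rational r.
Proof.
move=> k_neq0 [p E]; exists (p / k).
have kR_neq0 : ratr k != 0 :> R by rewrite fmorph_eq0.
by rewrite -(mulKf kR_neq0 r) E fmorph_div mulrC.
Qed.

Lemma Qfree_in_Qspan1_size (t : R) (s : seq R) :
  Qfree s -> {in s, forall y, in_Qspan1 t y} -> (size s <= 2)%N.
Proof.
move=> free s_span; rewrite leqNgt; apply/negP => s_gt2.
have /choice [pq pqE] : forall i : 'I_(size s),
    exists pq : rat * rat, s`_i = ratr pq.1 + ratr pq.2 * t.
  by move=> i; have [p [q E]] := s_span _ (mem_nth 0 (ltn_ord i)); exists (p, q).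
pose A : 'M[rat]_(size s, 2) := \matrix_(i, j) if j == 0 then (pq i).1 else (pq i).2.
have : kermx A != 0.
  rewrite kermx_eq0 /row_free ltn_eqF //.
  exact: leq_ltn_trans (rank_leq_col A) s_gt2.
case/matrix0Pn => i [j ker_ij].
pose v := row i (kermx A).
have vA0 k : \sum_l v ord0 l * A l k = 0.
  have vA : v *m A = 0 by rewrite -row_mul mulmx_ker row0.
  by have := congr1 (fun M : 'M[rat]_(1, 2) => M ord0 k) vA; rewrite !mxE.
pose c := map (v ord0) (enum 'I_(size s)).
have cE (l : 'I_(size s)) : c`_l = v ord0 l.
  by rewrite (nth_map l) ?size_enum_ord // nth_ord_enum.
have c_size : size c = size s by rewrite size_map size_enum_ord.
have combination0 : \sum_(l < size s) ratr c`_l * s`_l = 0.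
  transitivity (ratr (\sum_l v ord0 l * A l 0) + ratr (\sum_l v ord0 l * A l 1) * t).
    rewrite !rmorph_sum mulr_suml -big_split; apply: eq_bigr => l _ /=.
    by rewrite cE pqE !mxE /= !rmorphM; ring.
  by rewrite !vA0 rmorph0 mul0r addr0.
have := free c c_size combination0 j.
by rewrite cE mxE => /eqP; rewrite (negbTE ker_ij).
Qed.

Lemma size_mask_le_Qspan_dim (s : seq R) (m : (size s).-tuple bool) :
  Qfree (mask m s) -> (size (mask m s) <= Qspan_dim s)%N.
Proof.
move=> free; rewrite /Qspan_dim.
apply: (leq_bigmax_cond (P := fun m : (size s).-tuple bool => `[< Qfree (mask m s) >])).
exact/asboolP.
Qed.

Lemma Qspan_dim_in_Qspan1 (t : R) (s : seq R) :
  {in s, forall y, in_Qspan1 t y} -> (Qspan_dim s <= 2)%N.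
Proof.
move=> s_span; apply/bigmax_leqP => m /asboolP free.
by apply: Qfree_in_Qspan1_size free _ => y /mem_mask; apply: s_span.
Qed.

Lemma not_Qfree3_in_Qspan1 (u v : R) :
  ~ is_rational u -> ~ Qfree [:: 1; u; v] -> in_Qspan1 u v.
Proof.
move=> irr_u; apply: contra_notP => v_notin.
move=> [|c0 [|c1 [|c2 [|]]]] //= _.
rewrite !big_ord_recl big_ord0 /= mulr1 addr0 => rel.
have c2_eq0 : c2 = 0.
  have [//|c2_neq0] := eqVneq c2 0; exfalso; apply: v_notin.
  by apply: (in_Qspan1_scale c2_neq0); exists (- c0), (- c1); rewrite !rmorphN; lra.
move: rel; rewrite c2_eq0 rmorph0 mul0r addr0 => rel.
have c1_eq0 : c1 = 0.
  have [//|c1_neq0] := eqVneq c1 0; exfalso; apply: irr_u.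
  by apply: (is_rational_scale c1_neq0); exists (- c0); rewrite rmorphN; lra.
move: rel; rewrite c1_eq0 rmorph0 mul0r addr0 => /eqP; rewrite fmorph_eq0 => /eqP c0_eq0.
by case=> [|[|[|i]]]; rewrite /= ?nth_nil.
Qed.

Lemma Qspan_dim_le2P (a b c : R) :
  (Qspan_dim [:: 1%R; a; b; c] <= 2)%N <->
  exists t, [/\ in_Qspan1 t a, in_Qspan1 t b & in_Qspan1 t c].
Proof.
split=> [dim_le2 | [t [ta tb tc]]]; last first.
  apply: (Qspan_dim_in_Qspan1 t) => y; rewrite !inE => /or4P[] /eqP ->//.
  by apply: in_Qspan1_rat; exists 1; rewrite rmorph1.
have not_free (m : 4.-tuple bool) : (2 < size (mask m [:: 1%R; a; b; c]))%N ->
    ~ Qfree (mask m [:: 1; a; b; c]).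
  move=> gt2 /size_mask_le_Qspan_dim le_dim.
  by move: (leq_trans gt2 le_dim); rewrite ltnNge dim_le2.
have not_free_ab := not_free [tuple true; true; true; false] erefl.
have not_free_ac := not_free [tuple true; true; false; true] erefl.
have not_free_bc := not_free [tuple true; false; true; true] erefl.
have [a_rat|irr_a] := pselect (is_rational a); last first.
  exists a; split; first exact: in_Qspan1_id.
    exact: not_Qfree3_in_Qspan1 irr_a not_free_ab.
  exact: not_Qfree3_in_Qspan1 irr_a not_free_ac.
have [b_rat|irr_b] := pselect (is_rational b); last first.
  exists b; split; [exact: in_Qspan1_rat | exact: in_Qspan1_id |].
  exact: not_Qfree3_in_Qspan1 irr_b not_free_bc.
by exists c; split; [exact: in_Qspan1_rat.. | exact: in_Qspan1_id].
Qed.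

Lemma skew3_mulmx (theta : 'M[R]_3) (v : 'cV[R]_3) : theta^T = - theta ->
  [/\ (theta *m v) 0 ord0 = theta 0 1 * v 1 ord0 + theta 0 2 * v 2 ord0,
      (theta *m v) 1 ord0 = theta 1 2 * v 2 ord0 - theta 0 1 * v 0 ord0 &
      (theta *m v) 2 ord0 = - (theta 0 2 * v 0 ord0 + theta 1 2 * v 1 ord0)].
Proof.
move=> skew; have skewE i j : theta j i = - theta i j.
  by have := congr1 (fun M : 'M_3 => M i j) skew; rewrite !mxE.
have diag0 i : theta i i = 0 by have := skewE i i; lra.
by rewrite !mxE !big_ord3 (skewE 0 1) (skewE 0 2) (skewE 1 2) !diag0; split; ring.
Qed.

Lemma skew3_degenerate_in_Qspan1 (theta : 'M[R]_3) (x : 'cV[rat]_3) :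
  theta^T = - theta -> x != 0 ->
  (forall i, is_rational ((theta *m map_mx ratr x) i ord0)) ->
  exists t, [/\ in_Qspan1 t (theta 0 1), in_Qspan1 t (theta 0 2)
              & in_Qspan1 t (theta 1 2)].
Proof.
move=> skew /matrix0Pn [i [j x_ij]] rat_x.
have [e0 e1 e2] := skew3_mulmx _ (map_mx ratr x) skew.
have [r0 E0] := rat_x 0; have [r1 E1] := rat_x 1; have [r2 E2] := rat_x 2.
rewrite {}e0 !mxE in E0; rewrite {}e1 !mxE in E1; rewrite {}e2 !mxE in E2.
move: x_ij; rewrite (ord1 j); case: (ord3P i) => -> x_i_neq0.
- exists (theta 1 2); split; [| | exact: in_Qspan1_id].
  + by apply: (in_Qspan1_scale x_i_neq0); exists (- r1), (x 2 ord0); rewrite rmorphN; lra.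
  + by apply: (in_Qspan1_scale x_i_neq0); exists (- r2), (- x 1 ord0); rewrite !rmorphN; lra.
- exists (theta 0 2); split; [| exact: in_Qspan1_id |].
  + by apply: (in_Qspan1_scale x_i_neq0); exists r0, (- x 2 ord0); rewrite rmorphN; lra.
  + by apply: (in_Qspan1_scale x_i_neq0); exists (- r2), (- x 0 ord0); rewrite !rmorphN; lra.
- exists (theta 0 1); split; [exact: in_Qspan1_id | |].
  + by apply: (in_Qspan1_scale x_i_neq0); exists r0, (- x 1 ord0); rewrite rmorphN; lra.
  + by apply: (in_Qspan1_scale x_i_neq0); exists r1, (x 0 ord0); lra.
Qed.

Lemma in_Qspan1_skew3_degenerate (theta : 'M[R]_3) (t : R) :
  theta^T = - theta ->
  in_Qspan1 t (theta 0 1) -> in_Qspan1 t (theta 0 2) -> in_Qspan1 t (theta 1 2) ->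
  exists x : 'cV[rat]_3, x != 0 /\
    forall i, is_rational ((theta *m map_mx ratr x) i ord0).
Proof.
move=> skew [pa [qa Ea]] [pb [qb Eb]] [pc [qc Ec]].
pose col3 (u0 u1 u2 : rat) : 'cV[rat]_3 := \col_i [:: u0; u1; u2]`_i.
have col3_neq0 u0 u1 u2 : [|| u0 != 0, u1 != 0 | u2 != 0] -> col3 u0 u1 u2 != 0.
  case/or3P=> u_neq0; apply/matrix0Pn; [exists 0 | exists 1 | exists 2];
    by exists ord0; rewrite mxE.
have entries u0 u1 u2 := skew3_mulmx _ (map_mx ratr (col3 u0 u1 u2)) skew.
have [q_neq0|/norP[/negPn/eqP qc0 /norP[/negPn/eqP qb0 /negPn/eqP qa0]]] :=
  boolP [|| qc != 0, qb != 0 | qa != 0].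
  exists (col3 qc (- qb) qa); split; first by apply: col3_neq0; rewrite oppr_eq0.
  have [e0 e1 e2] := entries qc (- qb) qa.
  move=> i; case: (ord3P i) => ->; rewrite ?e0 ?e1 ?e2 !mxE /= ?Ea ?Eb ?Ec ?rmorphN.
  - by exists (pb * qa - pa * qb); rewrite rmorphB !rmorphM; ring.
  - by exists (pc * qa - pa * qc); rewrite rmorphB !rmorphM; ring.
  - by exists (pc * qb - pb * qc); rewrite rmorphB !rmorphM; ring.
exists (col3 1 0 0); split; first by apply: col3_neq0; rewrite oner_neq0.
have [e0 e1 e2] := entries 1 0 0.
move=> i; case: (ord3P i) => ->; rewrite ?e0 ?e1 ?e2 !mxE /= ?Ea ?Eb ?Ec ?rmorphN.
- by exists 0; rewrite qa0 qb0 !rmorph0; ring.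
- by exists (- pa); rewrite qa0 qc0 !rmorph0 rmorph1; ring.
- by exists (- pb); rewrite qb0 qc0 !rmorph0 rmorph1; ring.
Qed.

End RationalSpans.

Theorem lemma4p1 (R : realType) (theta : 'M[R]_3) :
  theta^T = - theta ->
  (Q_nondegenerate theta <->
   leq 3 (Qspan_dim [:: 1; theta 0 1; theta 0 2; theta 1 2])).
Proof.
move=> skew; apply: (iff_trans (Q_nondegenerate_skewP _ skew)).
split=> [nondeg | dim_ge3 [x [x_neq0 rat_x]]].
  rewrite leqNgt; apply/negP => /Qspan_dim_le2P [t [ta tb tc]].
  by apply: nondeg; apply: (in_Qspan1_skew3_degenerate _ _ skew ta tb tc).
move: dim_ge3; rewrite leqNgt => /negP; apply; apply/Qspan_dim_le2P.
exact: skew3_degenerate_in_Qspan1 skew x_neq0 rat_x.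
Qed.
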